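(* Let $I=[0,1]$ and $f_{1,\infty}$ an $m$-periodic sequence of continuous self-maps of $I$. If $(I,f_{1,\infty})$ is sensitive, then it is syndetically sensitive, ergodically sensitive, collectively sensitive and multi-sensitive.
   Context: $m$-periodic: $f_{n+m}=f_n$ for all $n$. Write $f_1^n=f_n\circ\cdots\circ f_1$ and, for open $U$ and $\delta>0$, $N_{f_{1,\infty}}(U,\delta)=\{n\in\mathbb{N}:\exists x,y\in U,\ |f_1^n(x)-f_1^n(y)|>\delta\}$. Sensitive: there is $\delta>0$ such that for every $x\in I$ and neighbourhood $U$ of $x$ there are $y\in U$, $n\in\mathbb{N}$ with $|f_1^n(x)-f_1^n(y)|>\delta$. A set $F\subseteq\mathbb{N}$ is syndetic if there is $a\in\mathbb{N}$ with $\{i,\dots,i+a\}\cap F\ne\emptyset$ for all $i$; upper density $\overline{d}(S)=\limsup_{n\to\infty}\frac1n|S\cap\{0,\dots,n-1\}|$. Syndetically (resp. ergodically) sensitive: there is $\delta>0$ with $N_{f_{1,\infty}}(U,\delta)$ syndetic (resp. of positive upper density) for every non-empty open $U$. Multi-sensitive: there is $\delta>0$ such that for every $k$ and non-empty open $V_1,\dots,V_k$, $\bigcap_{i=1}^kN_{f_{1,\infty}}(V_i,\delta)\ne\emptyset$. Collectively sensitive: there is $\delta>0$ such that for any points $x_1,\dots,x_k\in I$ and any $\epsilon>0$ there exist $y_1,\dots,y_k$ with $|x_i-y_i|<\epsilon$, $n\in\mathbb{N}$ and $i_0\in\{1,\dots,k\}$ such that for each $i$, $|f_1^n(x_i)-f_1^n(y_{i_0})|>\delta$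 or $|f_1^n(y_i)-f_1^n(x_{i_0})|>\delta$. *)

From Stdlib Require Import Reals Lra Lia Classical ClassicalEpsilon.
Open Scope R_scope.

Definition inI (x : R) : Prop := 0 <= x <= 1.

Definition cont_selfmap_I (g : R -> R) : Prop :=
  (forall x, inI x -> inI (g x)) /\
  (forall x, inI x -> forall eps, eps > 0 -> exists d, d > 0 /\
     forall y, inI y -> Rabs (y - x) < d -> Rabs (g y - g x) < eps).

(* A sequence f_1, f_2, ... is encoded as f : nat -> R -> R, using indices n >= 1
   (f 0 is irrelevant). *)
Definition m_periodic (m : nat) (f : nat -> R -> R) : Prop :=
  (1 <= m)%nat /\ forall n x, (1 <= n)%nat -> inI x -> f (n + m)%nat x = f n x.

Fixpoint iter_comp (f : nat -> R -> R) (n : nat) (x : R) : R :=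
  match n with
  | O => x
  | S k => f (S k) (iter_comp f k x)
  end.

Definition open_in_I (U : R -> Prop) : Prop :=
  (forall x, U x -> inI x) /\
  (forall x, U x -> exists r, r > 0 /\ forall y, inI y -> Rabs (y - x) < r -> U y).

Definition nonempty (U : R -> Prop) : Prop := exists x, U x.

Definition nbhd_in_I (x : R) (U : R -> Prop) : Prop :=
  exists r, r > 0 /\ forall y, inI y -> Rabs (y - x) < r -> U y.

Definition Nset (f : nat -> R -> R) (U : R -> Prop) (delta : R) (n : nat) : Prop :=
  (1 <= n)%nat /\ exists x y, U x /\ U y /\
     Rabs (iter_comp f n x - iter_comp f n y) > delta.

Definition sensitive (f : nat -> R -> R) : Prop :=
  exists delta, delta > 0 /\
    forall x U, inI x -> nbhd_in_I x U ->
      exists y n, inI y /\ U y /\ (1 <= n)%nat /\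
        Rabs (iter_comp f n x - iter_comp f n y) > delta.

Definition syndetic (F : nat -> Prop) : Prop :=
  exists a : nat, forall i : nat, exists j, (i <= j <= i + a)%nat /\ F j.

Fixpoint count_below (S : nat -> Prop) (n : nat) : nat :=
  match n with
  | O => O
  | S k => (count_below S k +
            (if excluded_middle_informative (S k) then 1 else 0))%nat
  end.

(* upper density limsup_{n->oo} |S ∩ {0..n-1}| / n is > 0; since the ratios lie
   in [0,1], this is: exists c > 0 with ratio > c for infinitely many n. *)
Definition positive_upper_density (S : nat -> Prop) : Prop :=
  exists c, c > 0 /\ forall N : nat, exists n : nat,
    (N <= n)%nat /\ (1 <= n)%nat /\ INR (count_below S n) / INR n > c.

Definition syndetically_sensitive (f : nat -> R -> R) : Prop :=
  exists delta, delta > 0 /\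
    forall U, open_in_I U -> nonempty U -> syndetic (Nset f U delta).

Definition ergodically_sensitive (f : nat -> R -> R) : Prop :=
  exists delta, delta > 0 /\
    forall U, open_in_I U -> nonempty U -> positive_upper_density (Nset f U delta).

Definition multi_sensitive (f : nat -> R -> R) : Prop :=
  exists delta, delta > 0 /\
    forall (k : nat) (V : nat -> R -> Prop),
      (forall i, (i < k)%nat -> open_in_I (V i) /\ nonempty (V i)) ->
      exists n, forall i, (i < k)%nat -> Nset f (V i) delta n.

Definition collectively_sensitive (f : nat -> R -> R) : Prop :=
  exists delta, delta > 0 /\
    forall (k : nat) (x : nat -> R) (eps : R), (1 <= k)%nat ->
      (forall i, (i < k)%nat -> inI (x i)) -> eps > 0 ->
      exists (y : nat -> R) (n i0 : nat),
        (forall i, (i < k)%nat -> inI (y i) /\ Rabs (x i - y i) < eps) /\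
        (1 <= n)%nat /\ (i0 < k)%nat /\
        forall i, (i < k)%nat ->
          Rabs (iter_comp f n (x i) - iter_comp f n (y i0)) > delta \/
          Rabs (iter_comp f n (y i) - iter_comp f n (x i0)) > delta.

From Stdlib Require Import Reals Lra Lia ZArith ClassicalEpsilon.
Open Scope R_scope.

(* Sensitivity and continuity of the finitely many maps f_1^r (r < m) give
   rho > 0 such that f_1^{km} separates two points of any interval by rho for
   some k.  Cut [0,1] into cells of width rho/2.  If f_1^{km} separates two
   points of an interval by rho, the intermediate value theorem makes the image
   contain a whole cell, so separation on the interval at time km + n follows
   from separation on every cell at time n.  Since the cells are finitely many,
   strong induction on the time yields eta > 0 by which f_1^{tm} separates
   every cell for every t.  Pulling back once more (through cells of width
   eta/2 and the maps f_1^r, r < m) shows that every interval is separated by a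
   fixed theta at ALL large times: the system is cofinitely sensitive, and each
   of the four properties only needs a common cofinite set of times. *)

Lemma finite_upper_bound (M : nat) (P : nat -> nat -> Prop) :
  (forall i n n', P i n -> (n <= n')%nat -> P i n') ->
  (forall i, (i < M)%nat -> exists n, P i n) ->
  exists N, forall i, (i < M)%nat -> P i N.
Proof.
  intros Hmon H. induction M as [|M IH].
  - exists O. intros; lia.
  - destruct IH as [N1 HN1]; [intros; apply H; lia|].
    destruct (H M (Nat.lt_succ_diag_r M)) as [n2 Hn2].
    exists (Nat.max N1 n2). intros i Hi.
    destruct (Nat.eq_dec i M) as [->|HiM].
    + apply Hmon with n2; [exact Hn2 | lia].
    + apply Hmon with N1; [apply HN1; lia | lia].
Qed.

Lemma finite_pos_lower_bound (M : nat) (P : nat -> R -> Prop) :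
  (forall i e e', P i e -> 0 < e' <= e -> P i e') ->
  (forall i, (i < M)%nat -> exists e, e > 0 /\ P i e) ->
  exists e, e > 0 /\ forall i, (i < M)%nat -> P i e.
Proof.
  intros Hmon H. induction M as [|M IH].
  - exists 1. split; [lra | intros; lia].
  - destruct IH as [e1 [He1 HN1]]; [intros; apply H; lia|].
    destruct (H M (Nat.lt_succ_diag_r M)) as [e2 [He2 Hn2]].
    assert (Hmin : 0 < Rmin e1 e2) by (apply Rmin_glb_lt; lra).
    exists (Rmin e1 e2). split; [exact Hmin|]. intros i Hi.
    destruct (Nat.eq_dec i M) as [->|HiM].
    + apply Hmon with e2; [exact Hn2 | split; [exact Hmin | apply Rmin_r]].
    + apply Hmon with e1; [apply HN1; lia | split; [exact Hmin | apply Rmin_l]].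
Qed.

Lemma finite_choice {A : Type} (a : A) (k : nat) (P : nat -> A -> Prop) :
  (forall i, (i < k)%nat -> exists y, P i y) ->
  exists y : nat -> A, forall i, (i < k)%nat -> P i (y i).
Proof.
  induction k as [|k IH]; intros H.
  - exists (fun _ => a). intros; lia.
  - destruct IH as [y Hy]; [intros; apply H; lia|].
    destruct (H k (Nat.lt_succ_diag_r k)) as [yk Hyk].
    exists (fun i => if Nat.eq_dec i k then yk else y i).
    intros i Hi. destruct (Nat.eq_dec i k) as [->|Hik]; [exact Hyk | apply Hy; lia].
Qed.

Lemma Rabs_far_from_one_of a b z d :
  Rabs (a - b) > d -> d / 2 < Rabs (a - z) \/ d / 2 < Rabs (b - z).
Proof.
  intros H. destruct (Rlt_dec (d / 2) (Rabs (a - z))) as [Ha|Ha]; [now left|].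
  right. pose proof (Rabs_triang (a - z) (z - b)).
  rewrite (Rabs_minus_sym z b) in H0.
  replace (a - z + (z - b)) with (a - b) in H0 by ring. lra.
Qed.

Lemma cont_selfmap_I_id : cont_selfmap_I (fun x => x).
Proof.
  split; [auto|]. intros x _ eps He. exists eps; split; auto.
Qed.

Lemma cont_selfmap_I_comp g h : cont_selfmap_I g -> cont_selfmap_I h ->
  cont_selfmap_I (fun x => g (h x)).
Proof.
  intros [Hg_in Hg] [Hh_in Hh]; split; [auto|].
  intros x Hx eps He.
  destruct (Hg (h x) (Hh_in x Hx) eps He) as [d1 [Hd1 H1]].
  destruct (Hh x Hx d1 Hd1) as [d2 [Hd2 H2]].
  exists d2; split; auto.
Qed.

(* Retraction of R onto I, used to extend maps of I to continuous maps of R. *)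
Definition clamp (t : R) : R := Rmax 0 (Rmin 1 t).

Lemma clamp_inI t : inI (clamp t).
Proof. unfold clamp, inI, Rmax, Rmin. repeat destruct Rle_dec; lra. Qed.

Lemma clamp_id t : inI t -> clamp t = t.
Proof. unfold clamp, inI, Rmax, Rmin. intros. repeat destruct Rle_dec; lra. Qed.

Lemma clamp_lipschitz s t : Rabs (clamp s - clamp t) <= Rabs (s - t).
Proof.
  unfold clamp, Rmax, Rmin. repeat destruct Rle_dec; unfold Rabs;
  repeat destruct Rcase_abs; lra.
Qed.

Lemma continuity_clamp_ext h : cont_selfmap_I h -> continuity (fun t => h (clamp t)).
Proof.
  intros [_ Hh] x eps He. cbn. unfold R_dist.
  destruct (Hh (clamp x) (clamp_inI x) eps He) as [d [Hd H]].
  exists d; split; auto. intros y [_ Hy].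
  apply H; [apply clamp_inI|]. pose proof (clamp_lipschitz y x). lra.
Qed.

Lemma cont_selfmap_I_unif h : cont_selfmap_I h -> forall eps, eps > 0 ->
  exists d, d > 0 /\ forall x y, inI x -> inI y -> Rabs (x - y) < d ->
    Rabs (h x - h y) < eps.
Proof.
  intros Hh eps He.
  destruct (@Heine_cor2 (fun t => h (clamp t)) 0 1
              (fun x _ => continuity_clamp_ext h Hh x) (mkposreal eps He)) as [[d Hd] H].
  exists d; split; auto. intros x y Hx Hy Hxy.
  specialize (H x y Hx Hy Hxy). cbn in H. rewrite !clamp_id in H; auto.
Qed.

Lemma cont_selfmap_I_ivt h a b z : cont_selfmap_I h -> inI a -> inI b -> a <= b ->
  (h a - z) * (h b - z) <= 0 -> exists w, a <= w <= b /\ h w = z.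
Proof.
  intros Hh Ha Hb Hab Hz.
  destruct (IVT_cor (fun t => h (clamp t) - z) a b
              (continuity_minus _ _ (continuity_clamp_ext h Hh) (continuity_const (fun _ => z) (fun _ _ => eq_refl)))
              Hab) as [w [Hw E]].
  - rewrite !clamp_id; auto.
  - exists w. split; [exact Hw|]. rewrite clamp_id in E; [lra | unfold inI in *; lra].
Qed.

Definition fits (c : R) (j : nat) : Prop := (INR j + 1) * c <= 1.

Lemma grid_cell_between c u v : c > 0 -> 0 <= u -> u + 2 * c <= v -> v <= 1 ->
  exists j : nat, fits c j /\ u <= INR j * c /\ (INR j + 1) * c <= v.
Proof.
  intros Hc Hu Huv Hv.
  destruct (archimed (u / c)) as [A1 A2].
  assert (Huc : u / c = u * / c) by reflexivity.
  assert (Hpos : (0 <= up (u / c))%Z).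
  { apply le_IZR. assert (0 <= u / c) by (apply Rmult_le_pos; [lra | left; apply Rinv_0_lt_compat; lra]).
    lra. }
  exists (Z.to_nat (up (u / c))). unfold fits.
  rewrite INR_IZR_INZ, Z2Nat.id by exact Hpos.
  assert (E1 : u <= IZR (up (u / c)) * c).
  { apply Rmult_gt_compat_r with (r := c) in A1; [|exact Hc].
    rewrite Huc, Rmult_assoc, Rinv_l, Rmult_1_r in A1; lra. }
  assert (E2 : IZR (up (u / c)) * c <= u + c).
  { assert (E : IZR (up (u / c)) <= u / c + 1) by lra.
    apply Rmult_le_compat_r with (r := c) in E; [|lra].
    rewrite Huc, Rmult_plus_distr_r, Rmult_assoc, Rinv_l, Rmult_1_r in E; lra. }
  lra.
Qed.

Lemma fits_bounded c : c > 0 -> exists M : nat, forall j, fits c j -> (j < M)%nat.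
Proof.
  intros Hc. destruct (INR_archimed c 1 Hc) as [M HM].
  exists M. intros j Hj. unfold fits in Hj.
  apply INR_lt. apply Rmult_lt_reg_r with c; [exact Hc|]. nra.
Qed.

Lemma cells_upper_bound c (P : nat -> nat -> Prop) : c > 0 ->
  (forall j n n', P j n -> (n <= n')%nat -> P j n') ->
  (forall j, fits c j -> exists n, P j n) ->
  exists N, forall j, fits c j -> P j N.
Proof.
  intros Hc Hmon H. destruct (fits_bounded c Hc) as [M HM].
  destruct (finite_upper_bound M (fun j n => fits c j -> P j n)) as [N HN].
  - intros j n n' Hj Hn Hf. apply Hmon with n; auto.
  - intros j _. destruct (classic (fits c j)) as [Hf|Hf].
    + destruct (H j Hf) as [n Hn]. now exists n.
    + exists O. intro; contradiction.
  - exists N. intros j Hj. apply HN; auto.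
Qed.

Lemma cells_pos_lower_bound c (P : nat -> R -> Prop) : c > 0 ->
  (forall j e e', P j e -> 0 < e' <= e -> P j e') ->
  (forall j, fits c j -> exists e, e > 0 /\ P j e) ->
  exists e, e > 0 /\ forall j, fits c j -> P j e.
Proof.
  intros Hc Hmon H. destruct (fits_bounded c Hc) as [M HM].
  destruct (finite_pos_lower_bound M (fun j e => fits c j -> P j e)) as [e [He HN]].
  - intros j e e' Hj He' Hf. apply Hmon with e; auto.
  - intros j _. destruct (classic (fits c j)) as [Hf|Hf].
    + destruct (H j Hf) as [e [He He']]. now exists e.
    + exists 1. split; [lra | intro; contradiction].
  - exists e. split; [exact He|]. intros j Hj. apply HN; auto.
Qed.

Lemma cell_in_image h c p q x0 y0 : cont_selfmap_I h -> c > 0 -> 0 <= p -> q <= 1 ->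
  p <= x0 <= q -> p <= y0 <= q -> 2 * c <= Rabs (h x0 - h y0) ->
  exists j, fits c j /\ forall z, INR j * c <= z <= (INR j + 1) * c ->
    exists w, p <= w <= q /\ h w = z.
Proof.
  intros Hh Hc Hp Hq.
  assert (Hordered : forall x0 y0, p <= x0 <= y0 -> y0 <= q -> 2 * c <= Rabs (h x0 - h y0) ->
    exists j, fits c j /\ forall z, INR j * c <= z <= (INR j + 1) * c ->
      exists w, p <= w <= q /\ h w = z).
  { clear x0 y0. intros x0 y0 Hx Hy Hd.
    assert (Ix : inI x0) by (unfold inI; lra). assert (Iy : inI y0) by (unfold inI; lra).
    pose proof (proj1 Hh x0 Ix) as Hx'. pose proof (proj1 Hh y0 Iy) as Hy'. unfold inI in *.
    destruct (grid_cell_between c (Rmin (h x0) (h y0)) (Rmax (h x0) (h y0))) as [j [Hj [J1 J2]]];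
      [ exact Hc
      | unfold Rmin; destruct Rle_dec; lra
      | unfold Rmin, Rmax; destruct Rle_dec; unfold Rabs in Hd; destruct Rcase_abs in Hd; lra
      | unfold Rmax; destruct Rle_dec; lra |].
    exists j. split; [exact Hj|]. intros z Hz.
    destruct (cont_selfmap_I_ivt h x0 y0 z Hh Ix Iy (proj2 Hx)) as [w [Hw E]].
    - unfold Rmin, Rmax in *. destruct Rle_dec; nra.
    - exists w. split; [lra | exact E]. }
  intros Hx Hy Hd. destruct (Rle_dec x0 y0).
  - apply (Hordered x0 y0); auto; lra.
  - apply (Hordered y0 x0); [lra | lra | now rewrite Rabs_minus_sym].
Qed.

Lemma open_in_I_interval U : open_in_I U -> nonempty U ->
  exists p q, 0 <= p /\ p < q /\ q <= 1 /\ forall y, p <= y <= q -> U y.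
Proof.
  intros [HI Ho] [x Hx].
  destruct (Ho x Hx) as [r [Hr Hball]]. pose proof (HI x Hx) as Ix. unfold inI in Ix.
  set (s := Rmin (r / 2) (1 / 2)).
  assert (Hs : 0 < s <= r / 2 /\ s <= 1 / 2)
    by (unfold s; repeat split; [apply Rmin_glb_lt; lra | apply Rmin_l | apply Rmin_r]).
  destruct (Rle_dec x (1 / 2)).
  - exists x, (x + s). repeat split; try lra. intros y Hy. apply Hball.
    + unfold inI; lra.
    + unfold Rabs; destruct Rcase_abs; lra.
  - exists (x - s), x. repeat split; try lra. intros y Hy. apply Hball.
    + unfold inI; lra.
    + unfold Rabs; destruct Rcase_abs; lra.
Qed.

Lemma open_in_I_ball a eps : open_in_I (fun y => inI y /\ Rabs (y - a) < eps).
Proof.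
  split; [now intros y []|].
  intros y [Iy Hy]. exists (eps - Rabs (y - a)). split; [lra|].
  intros z Iz Hz. split; [exact Iz|].
  pose proof (Rabs_triang (z - y) (y - a)).
  replace (z - y + (y - a)) with (z - a) in H by ring. lra.
Qed.

Lemma iter_comp_add_eq f a b x y : iter_comp f a x = iter_comp f a y ->
  iter_comp f (a + b) x = iter_comp f (a + b) y.
Proof.
  intros E. induction b as [|b IH].
  - now rewrite Nat.add_0_r.
  - rewrite Nat.add_succ_r. cbn. now rewrite IH.
Qed.

Section PeriodicSystem.

Variable m : nat.
Variable f : nat -> R -> R.
Hypothesis f_periodic : m_periodic m f.
Hypothesis f_cont : forall n, (1 <= n)%nat -> cont_selfmap_I (f n).

Lemma iter_comp_cont n : cont_selfmap_I (iter_comp f n).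
Proof.
  induction n as [|n IH]; [apply cont_selfmap_I_id|].
  apply (cont_selfmap_I_comp (f (S n))); [apply f_cont; lia | exact IH].
Qed.

Lemma iter_comp_inI n x : inI x -> inI (iter_comp f n x).
Proof. apply (proj1 (iter_comp_cont n)). Qed.

Lemma f_add_mul_period n k x : (1 <= n)%nat -> inI x -> f (n + k * m)%nat x = f n x.
Proof.
  intros Hn Hx. induction k as [|k IH]; [now rewrite Nat.add_0_r|].
  replace (n + S k * m)%nat with (n + k * m + m)%nat by lia.
  rewrite (proj2 f_periodic); [exact IH | lia | exact Hx].
Qed.

Lemma iter_comp_mul_period_add k r x : inI x ->
  iter_comp f (k * m + r) x = iter_comp f r (iter_comp f (k * m) x).
Proof.
  intros Hx. induction r as [|r IH]; [now rewrite Nat.add_0_r|].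
  rewrite Nat.add_succ_r. cbn. rewrite IH.
  replace (S (k * m + r)) with (S r + k * m)%nat by lia.
  apply f_add_mul_period; [lia | apply iter_comp_inI, iter_comp_inI, Hx].
Qed.

Definition spread (n : nat) (p q e : R) : Prop :=
  exists x y, p <= x <= q /\ p <= y <= q /\
    e <= Rabs (iter_comp f n x - iter_comp f n y).

Lemma spread_le n p q e e' : spread n p q e -> e' <= e -> spread n p q e'.
Proof. intros [x [y [Hx [Hy Hd]]]] He. exists x, y. repeat split; lra. Qed.

Lemma spread_0_le_width p q e : spread 0 p q e -> e <= q - p.
Proof.
  intros [x [y [Hx [Hy Hd]]]]. cbn in Hd.
  unfold Rabs in Hd; destruct Rcase_abs in Hd; lra.
Qed.

Lemma spread_pos_before a b p q e : e > 0 -> spread (a + b) p q e ->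
  exists e', e' > 0 /\ spread a p q e'.
Proof.
  intros He [x [y [Hx [Hy Hd]]]].
  exists (Rabs (iter_comp f a x - iter_comp f a y)). split.
  - apply Rabs_pos_lt. intro E. apply Rminus_diag_uniq, (iter_comp_add_eq f a b) in E.
    rewrite E, Rminus_diag, Rabs_R0 in Hd. lra.
  - exists x, y. repeat split; lra.
Qed.

Lemma spread_mul_period_add k n c p q e : c > 0 -> 0 <= p -> q <= 1 ->
  spread (k * m) p q (2 * c) ->
  (forall j, fits c j -> spread n (INR j * c) ((INR j + 1) * c) e) ->
  spread (k * m + n) p q e.
Proof.
  intros Hc Hp Hq [x0 [y0 [Hx0 [Hy0 Hd0]]]] Hcells.
  destruct (cell_in_image (iter_comp f (k * m)) c p q x0 y0 (iter_comp_cont _) Hc Hp Hq Hx0 Hy0 Hd0)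
    as [j [Hj Himage]].
  destruct (Hcells j Hj) as [x [y [Hx [Hy Hd]]]].
  destruct (Himage x Hx) as [wx [Hwx Ex]]. destruct (Himage y Hy) as [wy [Hwy Ey]].
  exists wx, wy. split; [exact Hwx|]. split; [exact Hwy|].
  rewrite !iter_comp_mul_period_add by (unfold inI; lra). now rewrite Ex, Ey.
Qed.

Definition spread_at_multiples (rho : R) : Prop :=
  forall p q, 0 <= p -> p < q -> q <= 1 -> exists k, spread (k * m) p q rho.

Lemma sensitive_spread_at_multiples : sensitive f ->
  exists rho, rho > 0 /\ spread_at_multiples rho.
Proof.
  intros [delta [Hdelta Hs]].
  assert (Hm : (1 <= m)%nat) by apply f_periodic.
  destruct (finite_pos_lower_bound m (fun r e => forall x y, inI x -> inI y -> Rabs (x - y) < e ->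
              Rabs (iter_comp f r x - iter_comp f r y) < delta)) as [rho [Hrho Hunif]].
  { intros r e e' H He' x y Hx Hy Hxy. apply H; auto; lra. }
  { intros r _. apply cont_selfmap_I_unif; [apply iter_comp_cont | exact Hdelta]. }
  exists rho. split; [exact Hrho|]. intros p q Hp Hpq Hq.
  set (x := (p + q) / 2).
  assert (Ix : inI x) by (unfold inI, x; lra).
  destruct (Hs x (fun y => p <= y <= q) Ix) as [y [n [Iy [Uy [_ Hxy]]]]].
  { exists ((q - p) / 2). split; [lra|]. intros y _ Hy.
    apply Rabs_def2 in Hy. unfold x in Hy. lra. }
  exists (n / m)%nat, x, y. split; [unfold x; lra|]. split; [exact Uy|].
  apply Rnot_lt_le. intros Hlt.
  pose proof (Hunif (n mod m)%nat (Nat.mod_upper_bound n m ltac:(lia)) _ _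
                (iter_comp_inI _ x Ix) (iter_comp_inI _ y Iy) Hlt) as Hclose.
  rewrite <- !iter_comp_mul_period_add in Hclose by assumption.
  replace (n / m * m + n mod m)%nat with n in Hclose by (pose proof (Nat.div_mod n m); lia).
  lra.
Qed.

Lemma spread_at_multiples_cell rho c j : spread_at_multiples rho -> 0 < c < rho -> fits c j ->
  exists k, (1 <= k)%nat /\ spread (k * m) (INR j * c) ((INR j + 1) * c) rho.
Proof.
  intros G Hc Hj. unfold fits in Hj. pose proof (pos_INR j).
  destruct (G (INR j * c) ((INR j + 1) * c)) as [k Hk]; [nra | nra | exact Hj |].
  exists k. split; [|exact Hk].
  destruct k; [|lia]. apply spread_0_le_width in Hk. lra.
Qed.

Lemma spread_cells_before c rho N : c > 0 -> rho > 0 ->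
  exists e, e > 0 /\ forall j, fits c j -> forall t, (t <= N)%nat ->
    (exists k, (t <= k)%nat /\ spread (k * m) (INR j * c) ((INR j + 1) * c) rho) ->
    spread (t * m) (INR j * c) ((INR j + 1) * c) e.
Proof.
  intros Hc Hrho.
  apply (cells_pos_lower_bound c (fun j e => forall t, (t <= N)%nat ->
     (exists k, (t <= k)%nat /\ spread (k * m) (INR j * c) ((INR j + 1) * c) rho) ->
     spread (t * m) (INR j * c) ((INR j + 1) * c) e)); [exact Hc | |].
  - intros j e e' H He' t Ht Hk. apply spread_le with e; [apply H; auto | lra].
  - intros j _.
    destruct (finite_pos_lower_bound (S N) (fun t e =>
        (exists k, (t <= k)%nat /\ spread (k * m) (INR j * c) ((INR j + 1) * c) rho) ->
        spread (t * m) (INR j * c) ((INR j + 1) * c) e)) as [e [He H]].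
    + intros t e e' H He' Hk. apply spread_le with e; [apply H; auto | lra].
    + intros t _. destruct (classic (exists k, (t <= k)%nat /\
          spread (k * m) (INR j * c) ((INR j + 1) * c) rho)) as [[k [Htk Sk]]|Hno].
      * replace (k * m)%nat with (t * m + (k - t) * m)%nat in Sk by nia.
        destruct (spread_pos_before _ _ _ _ _ Hrho Sk) as [e' [He' S']].
        exists e'. split; [exact He'|]. intros _; exact S'.
      * exists 1. split; [lra | intro; contradiction].
    + exists e. split; [exact He|]. intros t Ht. apply H. lia.
Qed.

(* Strong induction on t, with k_j <= N a time at which the cell j is
   rho-separated: either t <= k_j, one of finitely many cases
   (spread_cells_before), or t = k_j + (t - k_j) and the cell is pulled back
   through f_1^{k_j m}. *)
Lemma spread_cells_uniform rho : rho > 0 -> spread_at_multiples rho ->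
  exists eta, 0 < eta <= rho /\ forall t j, fits (rho / 2) j ->
    spread (t * m) (INR j * (rho / 2)) ((INR j + 1) * (rho / 2)) eta.
Proof.
  intros Hrho G. set (c := rho / 2).
  assert (Hc : 0 < c < rho) by (unfold c; lra).
  destruct (cells_upper_bound c (fun j n => exists k, (1 <= k <= n)%nat /\
              spread (k * m) (INR j * c) ((INR j + 1) * c) rho)) as [N HN].
  - lra.
  - intros j n n' [k [Hk S]] Hn. exists k. split; [lia | exact S].
  - intros j Hj. destruct (spread_at_multiples_cell rho c j G Hc Hj) as [k [Hk S]].
    exists k, k. split; [lia | exact S].
  - destruct (spread_cells_before c rho N) as [e [He Hearly]]; [lra | exact Hrho |].
    exists (Rmin e rho). split; [split; [apply Rmin_glb_lt; lra | apply Rmin_r]|].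
    intro t. induction t as [t IH] using lt_wf_ind. intros j Hj.
    destruct (HN j Hj) as [k [Hk Sk]].
    destruct (le_lt_dec t k) as [Htk|Hkt].
    + apply spread_le with e; [|apply Rmin_l]. apply Hearly; [exact Hj | lia | now exists k].
    + replace (t * m)%nat with (k * m + (t - k) * m)%nat by nia.
      pose proof (pos_INR j). unfold fits in Hj.
      apply spread_mul_period_add with c; [lra | nra | exact Hj | |].
      * replace (2 * c) with rho by (unfold c; field). exact Sk.
      * intros j' Hj'. apply IH; [lia | exact Hj'].
Qed.

Lemma spread_eventually : sensitive f ->
  exists th, th > 0 /\ forall p q, 0 <= p -> p < q -> q <= 1 ->
    exists n0, (1 <= n0)%nat /\ forall n, (n0 <= n)%nat -> spread n p q th.
Proof.
  intros Hs.
  assert (Hm : (1 <= m)%nat) by apply f_periodic.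
  destruct (sensitive_spread_at_multiples Hs) as [rho [Hrho G]].
  destruct (spread_cells_uniform rho Hrho G) as [eta [Heta Hcells]].
  set (c := eta / 2).
  destruct (cells_pos_lower_bound c (fun j e => forall r, (r < m)%nat ->
              spread r (INR j * c) ((INR j + 1) * c) e)) as [th [Hth Hshort]].
  - unfold c; lra.
  - intros j e e' H He' r Hr. apply spread_le with e; [apply H; exact Hr | lra].
  - intros j Hj. apply finite_pos_lower_bound.
    + intros r e e' H He'. apply spread_le with e; [exact H | lra].
    + intros r Hr.
      destruct (spread_at_multiples_cell rho c j G) as [k [Hk Sk]]; [unfold c; lra | exact Hj |].
      replace (k * m)%nat with (r + (k * m - r))%nat in Sk by nia.
      exact (spread_pos_before _ _ _ _ _ Hrho Sk).
  - exists th. split; [exact Hth|]. intros p q Hp Hpq Hq.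
    destruct (G p q Hp Hpq Hq) as [k1 Sk1].
    exists (Nat.max 1 (k1 * m)). split; [lia|]. intros n Hn.
    pose proof (Nat.div_mod n m ltac:(lia)) as Dn.
    pose proof (Nat.mod_upper_bound n m ltac:(lia)) as Hr.
    set (k := (n / m)%nat) in *. set (r := (n mod m)%nat) in *.
    assert (Hk : (k1 <= k)%nat) by nia.
    assert (Sk : spread (k * m) p q eta).
    { replace (k * m)%nat with (k1 * m + (k - k1) * m)%nat by nia.
      apply spread_mul_period_add with (rho / 2); [lra | exact Hp | exact Hq | |].
      - replace (2 * (rho / 2)) with rho by field. exact Sk1.
      - intros j Hj. apply Hcells, Hj. }
    replace n with (k * m + r)%nat by lia.
    apply spread_mul_period_add with c; [unfold c; lra | exact Hp | exact Hq | |].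
    + replace (2 * c) with eta by (unfold c; field). exact Sk.
    + intros j Hj. apply Hshort; [exact Hj | exact Hr].
Qed.

End PeriodicSystem.

Definition cofinitely_sensitive_at (f : nat -> R -> R) (delta : R) : Prop :=
  forall U, open_in_I U -> nonempty U ->
    exists n0, forall n, (n0 <= n)%nat -> Nset f U delta n.

Lemma sensitive_cofinitely_sensitive m f : m_periodic m f ->
  (forall n, (1 <= n)%nat -> cont_selfmap_I (f n)) -> sensitive f ->
  exists delta, delta > 0 /\ cofinitely_sensitive_at f delta.
Proof.
  intros Hper Hcont Hs.
  destruct (spread_eventually m f Hper Hcont Hs) as [th [Hth Hev]].
  exists (th / 2). split; [lra|]. intros U Ho Hne.
  destruct (open_in_I_interval U Ho Hne) as [p [q [Hp [Hpq [Hq HU]]]]].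
  destruct (Hev p q Hp Hpq Hq) as [n0 [Hn0 Hall]].
  exists n0. intros n Hn. split; [lia|].
  destruct (Hall n Hn) as [x [y [Hx [Hy Hd]]]].
  exists x, y. repeat split; auto. lra.
Qed.

Lemma cofinitely_sensitive_family f delta k V : cofinitely_sensitive_at f delta ->
  (forall i, (i < k)%nat -> open_in_I (V i) /\ nonempty (V i)) ->
  exists N, forall i, (i < k)%nat -> forall n, (N <= n)%nat -> Nset f (V i) delta n.
Proof.
  intros Hcof HV.
  apply (finite_upper_bound k (fun i N => forall n, (N <= n)%nat -> Nset f (V i) delta n)).
  - intros i N N' H HN n Hn. apply H. lia.
  - intros i Hi. destruct (HV i Hi) as [Ho Hne]. exact (Hcof _ Ho Hne).
Qed.

Lemma cofinite_syndetic (S : nat -> Prop) n0 :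
  (forall n, (n0 <= n)%nat -> S n) -> syndetic S.
Proof.
  intros HS. exists n0. intros i. exists (i + n0)%nat. split; [lia | apply HS; lia].
Qed.

Lemma count_below_cofinite (S : nat -> Prop) n0 :
  (forall n, (n0 <= n)%nat -> S n) -> forall n, (n - n0 <= count_below S n)%nat.
Proof.
  intros HS n. induction n as [|n IH]; cbn [count_below]; [lia|].
  destruct excluded_middle_informative as [Hn|Hn]; [lia|].
  assert (n < n0)%nat by (destruct (le_lt_dec n0 n); [exfalso; now apply Hn, HS | assumption]).
  lia.
Qed.

Lemma cofinite_positive_upper_density (S : nat -> Prop) n0 :
  (forall n, (n0 <= n)%nat -> S n) -> positive_upper_density S.
Proof.
  intros HS. exists (1 / 2). split; [lra|]. intros N.
  set (n := Nat.max N (2 * n0 + 1)).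
  exists n. split; [lia|]. split; [lia|].
  pose proof (count_below_cofinite S n0 HS n) as Hcount.
  apply le_INR in Hcount. rewrite minus_INR in Hcount by lia.
  assert (Hn : (2 * n0 + 1 <= n)%nat) by lia. apply le_INR in Hn.
  rewrite plus_INR, mult_INR in Hn. cbn in Hn.
  pose proof (pos_INR n0).
  apply Rmult_gt_reg_r with (INR n); [lra|]. unfold Rdiv.
  rewrite Rmult_assoc, Rinv_l by lra. lra.
Qed.

Lemma cofinitely_syndetically_sensitive f delta : delta > 0 ->
  cofinitely_sensitive_at f delta -> syndetically_sensitive f.
Proof.
  intros Hd Hcof. exists delta. split; [exact Hd|]. intros U Ho Hne.
  destruct (Hcof U Ho Hne) as [n0 Hn0]. exact (cofinite_syndetic _ n0 Hn0).
Qed.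

Lemma cofinitely_ergodically_sensitive f delta : delta > 0 ->
  cofinitely_sensitive_at f delta -> ergodically_sensitive f.
Proof.
  intros Hd Hcof. exists delta. split; [exact Hd|]. intros U Ho Hne.
  destruct (Hcof U Ho Hne) as [n0 Hn0]. exact (cofinite_positive_upper_density _ n0 Hn0).
Qed.

Lemma cofinitely_multi_sensitive f delta : delta > 0 ->
  cofinitely_sensitive_at f delta -> multi_sensitive f.
Proof.
  intros Hd Hcof. exists delta. split; [exact Hd|]. intros k V HV.
  destruct (cofinitely_sensitive_family f delta k V Hcof HV) as [N HN].
  exists N. intros i Hi. apply HN; [exact Hi | lia].
Qed.

(* Every y_i is chosen far from f_1^N(x_0) at a common time N, so i0 = 0 works. *)
Lemma cofinitely_collectively_sensitive f delta : delta > 0 ->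
  cofinitely_sensitive_at f delta -> collectively_sensitive f.
Proof.
  intros Hd Hcof. exists (delta / 2). split; [lra|].
  intros k x eps Hk Hx Heps.
  set (U := fun i y => inI y /\ Rabs (y - x i) < eps).
  destruct (cofinitely_sensitive_family f delta k U Hcof) as [N HN].
  { intros i Hi. split; [apply open_in_I_ball|].
    exists (x i). split; [exact (Hx i Hi)|]. rewrite Rminus_diag, Rabs_R0. lra. }
  set (z := iter_comp f N (x O)).
  destruct (finite_choice 0 k (fun i y => U i y /\ delta / 2 < Rabs (iter_comp f N y - z)))
    as [y Hy].
  { intros i Hi. destruct (HN i Hi N (le_n N)) as [_ [a [b [Ua [Ub Hab]]]]].
    destruct (Rabs_far_from_one_of _ _ z _ Hab) as [Ha|Hb]; [now exists a | now exists b]. }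
  exists y, N, O. split; [|split; [|split]].
  - intros i Hi. destruct (Hy i Hi) as [[Iy Dy] _]. split; [exact Iy|].
    now rewrite Rabs_minus_sym.
  - exact (proj1 (HN O Hk N (le_n N))).
  - exact Hk.
  - intros i Hi. right. apply (Hy i Hi).
Qed.

Theorem theorem4p3 (m : nat) (f : nat -> R -> R) :
  m_periodic m f ->
  (forall n, (1 <= n)%nat -> cont_selfmap_I (f n)) ->
  sensitive f ->
  syndetically_sensitive f /\ ergodically_sensitive f /\
  collectively_sensitive f /\ multi_sensitive f.
Proof.
  intros Hper Hcont Hs.
  destruct (sensitive_cofinitely_sensitive m f Hper Hcont Hs) as [delta [Hd Hcof]].
  split; [|split; [|split]].
  - exact (cofinitely_syndetically_sensitive f delta Hd Hcof).
  - exact (cofinitely_ergodically_sensitive f delta Hd Hcof).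
  - exact (cofinitely_collectively_sensitive f delta Hd Hcof).
  - exact (cofinitely_multi_sensitive f delta Hd Hcof).
Qed.
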